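(* Let $X$ be a reflexive complex Banach space, let $A$ be a positive self-adjoint operator from $X$ to $X^\ast$, and let $E$ be a bounded linear operator on $X$ such that $E(\operatorname{dom}A)\subseteq\operatorname{dom}A$ and $E^\ast A\subseteq AE$. Then the assignment $\hat E(Ax):=AEx$ ($x\in\operatorname{dom}A$) gives a well-defined linear operator $\hat E$ on $\operatorname{ran}A$, and $\hat E$ is bounded with respect to the norm of $H_A$.
   Context: $X^\ast$ denotes the conjugate dual of $X$ (continuous conjugate-linear functionals on $X$); $X$ is identified with $X^{\ast\ast}$. For $v\in X^\ast$, $x\in X$ write $(v,x):=v(x)$ and $(x,v):=\overline{v(x)}$. An operator $A$ from $X$ to $X^\ast$ is positive if $(Ax,x)\ge0$ for all $x\in\operatorname{dom}A$; its adjoint $A^\ast$ has domain $\{y\in X:x\mapsto(Ax,y)\text{ continuous on }\operatorname{dom}A\}$ and is determined by $(x,A^\ast y)=(Ax,y)$; $A$ is self-adjoint if $A=A^\ast$. For a bounded operator $E$ on $X$, $E^\ast$ is the bounded operator on $X^\ast$ with $(E^\ast v,x)=(v,Ex)$. $H_A$ is the completion of $\operatorname{ran}A$ with respect to the inner product $[Ax,Ay]_A:=(Ax,y)$ (well defined and positive definite on $\operatorname{ran}A$). *)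

From HB Require Import structures.
From mathcomp Require Import all_boot all_order all_algebra.
From mathcomp Require Import all_classical all_reals topology normedtype.
From mathcomp.real_closed Require Import complex.
Set Implicit Arguments. Unset Strict Implicit. Unset Printing Implicit Defensive.
Import Order.TTheory GRing.Theory Num.Theory.
Import numFieldNormedType.Exports.
Local Open Scope classical_set_scope.
Local Open Scope ring_scope.

Definition Cx (R : realType) : numClosedFieldType := R[i].

Section Defs.
Variable R : realType.
Local Notation C := (Cx R).
Variable X : normedModType C.

Definition conj_linear (v : X -> C) : Prop :=
  (forall x y : X, v (x + y) = v x + v y) /\
  (forall (a : C) (x : X), v (a *: x) = a^* * v x).

Definition in_cdual (v : X -> C) : Prop := conj_linear v /\ continuous v.

Definition bounded_op (E : X -> X) : Prop :=
  (forall (a : C) (x y : X), E (a *: x + y) = a *: E x + E y) /\ continuous E.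

Definition cadj_op (E : X -> X) (v : X -> C) : X -> C := fun x => v (E x).

(* reflexivity: every continuous conjugate-linear functional on X^* (continuity
   w.r.t. the dual norm, expressed as boundedness |phi v| <= c ||v||, where
   ||v|| = inf {M >= 0 | forall x, |v x| <= M |x|}) is of the form
   v |-> (x, v) = conj (v x) for some x in X. *)
Definition reflexive_space : Prop :=
  forall phi : (X -> C) -> C,
    (forall u v, in_cdual u -> in_cdual v -> phi (fun z => u z + v z) = phi u + phi v) ->
    (forall a v, in_cdual v -> phi (fun z => a * v z) = a^* * phi v) ->
    (exists c : R, forall v, in_cdual v -> forall M : R, 0 <= M ->
        (forall x, `|v x| <= (M%:C)%C * `|x|) -> `|phi v| <= ((c * M)%:C)%C) ->
    exists x : X, forall v, in_cdual v -> phi v = (v x)^*.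

Definition op_to_dual (domA : set X) (A : X -> X -> C) : Prop :=
  domA 0 /\
  (forall (a : C) x y, domA x -> domA y -> domA (a *: x + y)) /\
  (forall x, domA x -> in_cdual (A x)) /\
  (forall (a : C) x y, domA x -> domA y ->
     A (a *: x + y) = (fun z => a * A x z + A y z)).

Definition positive_op (domA : set X) (A : X -> X -> C) : Prop :=
  forall x, domA x -> 0 <= A x x.

Definition adj_dom (domA : set X) (A : X -> X -> C) : set X :=
  [set y | {within domA, continuous (fun x => A x y)}].

(* self-adjointness A = A^*: dom A is dense (so that A^* is determined),
   dom A^* = dom A, and (x, A y) = (A x, y) for x, y in dom A. *)
Definition selfadjoint_op (domA : set X) (A : X -> X -> C) : Prop :=
  closure domA = setT /\
  adj_dom domA A = domA /\
  (forall x y, domA x -> domA y -> (A y x)^* = A x y).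

Definition ranA (domA : set X) (A : X -> X -> C) : set (X -> C) :=
  [set u | exists2 x, domA x & A x = u].

End Defs.

From HB Require Import structures.
From mathcomp Require Import all_boot all_order all_algebra.
From mathcomp Require Import all_classical all_reals topology normedtype sequences.
From mathcomp.real_closed Require Import complex.
From mathcomp Require Import ring lra.
Set Implicit Arguments. Unset Strict Implicit. Unset Printing Implicit Defensive.
Import Order.TTheory GRing.Theory Num.Theory.
Import numFieldNormedType.Exports.
Local Open Scope classical_set_scope.
Local Open Scope ring_scope.

(* Take Ehat := E^*, i.e. u |-> u \o E: it maps Ax to AEx by hypothesis and is
   obviously linear.
   For the bound let a_k := (A E^k x, E^k x) >= 0.  As (A E^k x, E^(k+2) x) =
   a_(k+1), Cauchy-Schwarz for the positive form (Au, w) makes (a_k) log-convex,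
   so a_k >= a_0 (a_1 / a_0)^k; on the other hand a_k = (Ax, E^(2k) x) grows at
   most like ||E||^(2k).  Comparing the two rates gives a_1 <= ||E||^2 a_0, that
   is ||Ehat (Ax)||_A <= ||E|| ||Ax||_A. *)


Lemma sqr_le_mul_of_quadratic_ge0 (R : realFieldType) (p q s : R) : 0 <= q ->
  (forall t : R, 0 <= p - 2 * t * s + t ^+ 2 * q) -> s ^+ 2 <= p * q.
Proof.
move=> q_ge0 quad_ge0; have [q_eq0|q_neq0] := eqVneq q 0.
  have [->|s_neq0] := eqVneq s 0; first by rewrite q_eq0 expr0n mulr0.
  have := quad_ge0 ((p + 1) / (2 * s)); rewrite q_eq0 !mulr0 addr0.
  have -> : 2 * ((p + 1) / (2 * s)) * s = p + 1 by field.
  lra.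
have q_gt0 : 0 < q by rewrite lt0r q_neq0.
have := quad_ge0 (s / q).
have -> : p - 2 * (s / q) * s + (s / q) ^+ 2 * q = (p * q - s ^+ 2) / q by field.
by rewrite pmulr_lge0 ?invr_gt0 // subr_ge0.
Qed.

Section LogConvexSequence.
Variables (R : realFieldType) (a : nat -> R).
Hypotheses (a_ge0 : forall k, 0 <= a k)
  (a_logconvex : forall k, a k.+1 ^+ 2 <= a k * a k.+2).

Lemma logconvex_eq0S k : a k = 0 -> a k.+1 = 0.
Proof.
move=> ak_eq0; apply/eqP; rewrite -sqrf_eq0 eq_le sqr_ge0 andbT.
by rewrite -(mul0r (a k.+2)) -ak_eq0.
Qed.

Lemma logconvex_ratio_mono k : a 1 * a k <= a 0 * a k.+1.
Proof.
elim: k => [|k IH]; first by rewrite mulrC.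
have [ak_eq0|ak_neq0] := eqVneq (a k) 0.
  by rewrite (logconvex_eq0S ak_eq0) mulr0 mulr_ge0.
have ak_gt0 : 0 < a k by rewrite lt0r ak_neq0 a_ge0.
have h1 : a 1 * a k * a k.+1 <= a 0 * a k.+1 ^+ 2.
  by rewrite expr2 mulrA ler_wpM2r.
have h2 : a 0 * a k.+1 ^+ 2 <= a 0 * (a k * a k.+2) by rewrite ler_wpM2l.
rewrite -(ler_pM2l ak_gt0) mulrCA [X in _ <= X]mulrCA mulrA.
exact: le_trans h1 h2.
Qed.

Lemma logconvex_geometric_lower k : a 1 ^+ k * a 0 <= a 0 ^+ k * a k.
Proof.
elim: k => [|k IH]; first by rewrite !expr0.
rewrite exprS -mulrA (le_trans (ler_wpM2l (a_ge0 1) IH)) //.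
rewrite mulrCA exprSr -mulrA ler_wpM2l ?exprn_ge0 //.
exact: logconvex_ratio_mono.
Qed.

End LogConvexSequence.

Lemma logconvex_geometric_bound (R : archiRealFieldType) (a : nat -> R) (c B : R) :
  0 <= c -> (forall k, 0 <= a k) -> (forall k, a k.+1 ^+ 2 <= a k * a k.+2) ->
  (forall k, a k <= B * c ^+ k) -> a 1 <= c * a 0.
Proof.
move=> c_ge0 a_ge0 a_logconvex a_bound.
have [a0_eq0|a0_neq0] := eqVneq (a 0) 0.
  by rewrite (logconvex_eq0S a_logconvex a0_eq0) a0_eq0 mulr0.
have a0_gt0 : 0 < a 0 by rewrite lt0r a0_neq0 a_ge0.
rewrite leNgt; apply/negP => a1_gt.
have a1_gt0 : 0 < a 1 by apply: le_lt_trans a1_gt; rewrite mulr_ge0.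
set z := c * a 0 / a 1.
have z_ge0 : 0 <= z by rewrite divr_ge0 ?mulr_ge0 // ltW.
have z_lt1 : `|z| < 1 by rewrite ger0_norm // ltr_pdivrMr // mul1r.
have a0_le k : a 0 <= B * z ^+ k.
  rewrite expr_div_n mulrA ler_pdivlMr ?exprn_gt0 // mulrC.
  apply: le_trans (logconvex_geometric_lower a_ge0 a_logconvex k) _.
  rewrite exprMn [c ^+ k * _]mulrC mulrCA.
  by rewrite ler_wpM2l // exprn_ge0 // ltW.
have /cvgr_lt/(_ _ a0_gt0) [n _ /(_ n (leqnn n))] := cvg_geometric B z_lt1.
by rewrite /= ltNge a0_le.
Qed.

Lemma iter_bounded_le (K : numFieldType) (V : normedModType K) (E : V -> V) (c : K) :
  0 <= c -> (forall z, `|E z| <= c * `|z|) ->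
  forall n z, `|iter n E z| <= c ^+ n * `|z|.
Proof.
move=> c_ge0 E_le; elim=> [|n IH] z /=; first by rewrite expr0 mul1r.
by rewrite (le_trans (E_le _)) // exprS -mulrA ler_wpM2l.
Qed.

Section ComplexBounds.
Variable R : realType.
Local Notation C := (Cx R).

Lemma continuous0_homogeneous_bounded (X Y : normedModType C) (f : X -> Y) :
  {for 0, continuous f} -> (forall a z, `|f (a *: z)| = `|a| * `|f z|) ->
  exists2 M : R, 0 < M & forall z, `|f z| <= M%:C%C * `|z|.
Proof.
move=> f_cont f_hom.
have f0 : f 0 = 0 by apply/normr0_eq0; rewrite -(scale0r 0) f_hom normr0 mul0r.
move: f_cont; rewrite /prop_for /continuous_at f0.
move=> /cvgrPdist_lt /(_ 1 ltr01) /nbhs_norm0P [e /= e_gt0 f_small].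
have e_real : (2 / e : C) \is Num.real by apply: gtr0_real; rewrite divr_gt0.
exists (complex.Re (2 / e : C)); first by rewrite -ltcR RRe_real // divr_gt0.
rewrite RRe_real // => z.
have [->|z_neq0] := eqVneq z 0; first by rewrite f0 !normr0 mulr0.
(* a rescales z to norm e / 2, inside the ball where `|f| < 1. *)
have z_gt0 : 0 < `|z| by rewrite normr_gt0.
set a : C := e / (2 * `|z|).
have a_gt0 : 0 < a by rewrite divr_gt0 // mulr_gt0.
have : `|a *: z| < e.
  rewrite normrZ gtr0_norm //.
  have -> : a * `|z| = e / 2 by rewrite /a; field; rewrite gt_eqF.
  by rewrite ltr_pdivrMr // ltr_pMr // ltr1n.
move=> /f_small /=; rewrite sub0r normrN f_hom gtr0_norm // => afz_lt1.
have -> : `|f z| = a^-1 * (a * `|f z|) by rewrite mulKf // gt_eqF.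
have -> : 2 / e * `|z| = a^-1 * 1 by rewrite /a; field; rewrite !gt_eqF.
by rewrite ler_pM2l ?invr_gt0 // ltW.
Qed.

Variable X : normedModType C.

Lemma cdual_bounded (v : X -> C) : in_cdual v ->
  exists2 M : R, 0 < M & forall z, `|v z| <= M%:C%C * `|z|.
Proof.
move=> [[_ v_scale] v_cont]; apply: continuous0_homogeneous_bounded.
  exact: v_cont.
by move=> a z; rewrite v_scale normrM norm_conjC.
Qed.

Lemma bounded_op_bounded (E : X -> X) : bounded_op E ->
  exists2 K : R, 0 < K & forall z, `|E z| <= K%:C%C * `|z|.
Proof.
move=> [E_lin E_cont]; apply: continuous0_homogeneous_bounded.
  exact: E_cont.
have E0 : E 0 = 0.
  have := E_lin 1 0 0; rewrite !scale1r addr0 => E0_twice.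
  by apply: (addrI (E 0)); rewrite -E0_twice addr0.
by move=> a z; rewrite -[a *: z]addr0 E_lin E0 addr0 normrZ.
Qed.

End ComplexBounds.

Section PositiveSymmetricForm.
Variables (R : realType) (X : normedModType (Cx R)) (domA : set X) (A : X -> X -> Cx R).
Hypotheses (opA : op_to_dual domA A) (posA : positive_op domA A)
  (symA : forall x y, domA x -> domA y -> (A y x)^* = A x y).

Lemma form_diag_real w : domA w -> (complex.Re (A w w))%:C%C = A w w.
Proof. by move=> dw; apply/RRe_real/ger0_real/posA. Qed.

Lemma form_diag_eq y y' : domA y -> domA y' -> A y = A y' -> A y y = A y' y'.
Proof.
move=> dy dy' Ay_eq.
by rewrite {1}Ay_eq -(symA dy' dy) Ay_eq conj_Creal // ger0_real // posA.
Qed.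

Lemma form_cauchy_schwarz_real u w (s : R) : domA u -> domA w ->
  A u w = s%:C%C -> s ^+ 2 <= complex.Re (A u u) * complex.Re (A w w).
Proof.
move=> du dw Auw.
have [_ [domL [Acd Alin]]] := opA.
have realC (r : R) : r%:C%C \is @Num.real (Cx R) by apply/complex_realP; exists r.
have Awu : A w u = s%:C%C by rewrite -(symA dw du) Auw conj_Creal.
set p := complex.Re (A w w); set q := complex.Re (A u u).
have Aww : A w w = p%:C%C by rewrite form_diag_real.
have Auu : A u u = q%:C%C by rewrite form_diag_real.
rewrite mulrC; apply: sqr_le_mul_of_quadratic_ge0 => [|t].
  by rewrite -ler0c -Auu posA.
have expand : A (- t%:C%C *: u + w) (- t%:C%C *: u + w) =
    (p - 2 * t * s + t ^+ 2 * q)%:C%C.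
  have [[addu scu] _] := Acd u du; have [[addw scw] _] := Acd w dw.
  rewrite Alin // addu scu addw scw Auw Awu Auu Aww conj_Creal ?realN //.
  rewrite !(rmorphD, rmorphB, rmorphM, rmorphXn, rmorph_nat) /=.
  ring.
by rewrite -ler0c -expand; apply/posA/domL.
Qed.

Variable E : X -> X.
Hypotheses (Edom : forall x, domA x -> domA (E x))
  (AE : forall x, domA x -> A (E x) = cadj_op E (A x)).

Lemma domA_iter k x : domA x -> domA (iter k E x).
Proof. by move=> dx; elim: k => //= k; apply: Edom. Qed.

Lemma form_iterC k u z : domA u -> A (iter k E u) z = A u (iter k E z).
Proof.
move=> du; elim: k z => [|k IH] z //=.
rewrite AE; last exact: domA_iter.
by rewrite /cadj_op IH -iterSr.
Qed.

Definition diag_orbit x k := complex.Re (A (iter k E x) (iter k E x)).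

Lemma diag_orbit_ge0 x k : domA x -> 0 <= diag_orbit x k.
Proof.
by move=> dx; have dk := domA_iter k dx; rewrite -ler0c form_diag_real // posA.
Qed.

Lemma diag_orbit_logconvex x k : domA x ->
  diag_orbit x k.+1 ^+ 2 <= diag_orbit x k * diag_orbit x k.+2.
Proof.
move=> dx; have dk := domA_iter k dx.
apply: form_cauchy_schwarz_real => //; first exact: domA_iter.
by rewrite /diag_orbit form_diag_real //= ?AE //; apply: Edom.
Qed.

Lemma diag_orbit_bound x (K M : R) k : domA x -> 0 <= K -> 0 <= M ->
  (forall z, `|E z| <= K%:C%C * `|z|) -> (forall z, `|A x z| <= M%:C%C * `|z|) ->
  diag_orbit x k <= M * complex.Re `|x| * (K ^+ 2) ^+ k.
Proof.
move=> dx K_ge0 M_ge0 E_le Ax_le; have dk := domA_iter k dx.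
rewrite -lecR form_diag_real //.
apply: le_trans (real_ler_norm (ger0_real (posA dk))) _.
rewrite form_iterC // -iterD; apply: le_trans (Ax_le _) _.
have Kc_ge0 : 0 <= K%:C%C :> Cx R by rewrite ler0c.
have Mc_ge0 : 0 <= M%:C%C :> Cx R by rewrite ler0c.
apply: le_trans (ler_wpM2l Mc_ge0 (iter_bounded_le Kc_ge0 E_le _ _)) _.
rewrite -(RRe_real (normr_real x)) -rmorphXn -!rmorphM lecR.
by rewrite addnn -mul2n exprM mulrA [X in _ <= X]mulrAC.
Qed.

End PositiveSymmetricForm.

Theorem lemma4 (R : realType) (X : completeNormedModType (Cx R))
  (domA : set X) (A : X -> X -> Cx R) (E : X -> X) :
  reflexive_space X ->
  op_to_dual domA A -> positive_op domA A -> selfadjoint_op domA A ->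
  bounded_op E ->
  (forall x, domA x -> domA (E x)) ->
  (forall x, domA x -> A (E x) = cadj_op E (A x)) ->
  exists Ehat : (X -> Cx R) -> (X -> Cx R),
    (forall x, domA x -> Ehat (A x) = A (E x)) /\
    (forall (a : Cx R) u v, ranA domA A u -> ranA domA A v ->
       Ehat (fun z => a * u z + v z) = (fun z => a * Ehat u z + Ehat v z)) /\
    (exists c : R, 0 <= c /\
       forall x y, domA x -> domA y -> A y = Ehat (A x) ->
         A y y <= (c%:C)%C * A x x).
Proof.
move=> _ opA posA [_ [_ symA]] Ebd Edom AE.
exists (cadj_op E); split; first by move=> x /AE.
split; first by [].
have [K K_gt0 E_le] := bounded_op_bounded Ebd.
exists (K ^+ 2); split => [|x y dx dy Ay]; first by rewrite exprn_ge0 ?ltW.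
have [_ [_ [Acd _]]] := opA.
have [M M_gt0 Ax_le] := cdual_bounded (Acd x dx).
have dEx := Edom x dx.
rewrite (form_diag_eq posA symA dy dEx); last by rewrite Ay AE.
rewrite -(form_diag_real posA dEx) -(form_diag_real posA dx) -rmorphM lecR.
apply: (logconvex_geometric_bound (a := diag_orbit A E x) (B := M * complex.Re `|x|)).
- by rewrite exprn_ge0 ?ltW.
- by move=> k; apply: (diag_orbit_ge0 posA Edom).
- by move=> k; apply: (diag_orbit_logconvex opA posA symA Edom AE).
- by move=> k; apply: (diag_orbit_bound posA Edom AE); rewrite ?ltW.
Qed.
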